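(* Let $f_0$ be a probability density on $[0,1]$ with $0<\rho_0\le f_0\le D_0<\infty$, and let $X_1,\dots,X_n$ be i.i.d. with density $f_0$. Let $(a_n)$ be real numbers with $na_n^2\ge1$ for all $n\ge1$, and let $(\Pi_n)$ be priors on probability densities on $[0,1]$ that are bounded and bounded away from $0$, each $\Pi_n$ supported in $\{f: h(f,f_0)\le a_n\}$. Let $(\gamma_n)\subset L^\infty[0,1]$, $\tilde\gamma_n=\gamma_n-\int_0^1\gamma_nf_0$, and suppose for some $m>0$ and all $n\ge1$, $$\|\tilde\gamma_n\|_L\le m,\qquad\|\tilde\gamma_n\|_\infty\le\big(4a_n\log(n+1)\big)^{-1}.$$ Then there exists $C>0$ depending only on $m$ and $\|f_0\|_\infty$ such that for every $n\ge1$ and every real $t$ with $|t|\le\log n$, $$E^{\Pi_n}\big[e^{t\sqrt n\langle f-f_0,\gamma_n\rangle_2}\mid X^{(n)}\big]\le e^{Ct^2+tW_n(\gamma_n)}\,\frac{\int e^{\ell_n(f_t)-\ell_n(f_0)}\,d\Pi_n(f)}{\int e^{\ell_n(f)-\ell_n(f_0)}\,d\Pi_n(f)},$$ where $f_t=f\,e^{-t\tilde\gamma_n/\sqrt n}\big/\int_0^1f\,e^{-t\tilde\gamma_n/\sqrt n}$.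
   Context: $\ell_n(f)=\sum_{i=1}^n\log f(X_i)$. For $u\in L^2(f_0)$, $\|u\|_L^2=\int_0^1(u-\int uf_0)^2f_0$ and $W_n(u)=n^{-1/2}\sum_{i=1}^n\big(u(X_i)-\int_0^1uf_0\big)$. $h$ is the Hellinger distance, $h(f,g)^2=\int_0^1(\sqrt f-\sqrt g)^2$. $E^{\Pi_n}[\cdot\mid X^{(n)}]$ is expectation under the posterior $d\Pi_n(f\mid X^{(n)})\propto e^{\ell_n(f)}d\Pi_n(f)$. *)

From HB Require Import structures.
From mathcomp Require Import all_boot all_order all_algebra.
From mathcomp Require Import all_classical all_reals all_analysis.
Set Implicit Arguments. Unset Strict Implicit. Unset Printing Implicit Defensive.
Import Order.TTheory GRing.Theory Num.Theory.
Import numFieldNormedType.Exports.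
Local Open Scope classical_set_scope.
Local Open Scope ring_scope.

Section defs.
Context {R : realType}.

Definition leb01 := (@lebesgue_measure R).
Definition I01 : set R := `[0%R, 1%R]%classic.

Definition int01 (g : R -> R) : R := Rintegral leb01 I01 g.

Definition ip01 (f g : R -> R) : R := int01 (fun x => f x * g x).

Definition mean0 (f0 u : R -> R) : R := int01 (fun y => u y * f0 y).

Definition centered (f0 u : R -> R) : R -> R := fun x => u x - mean0 f0 u.

Definition Lnorm_f0 (f0 u : R -> R) : R :=
  Num.sqrt (int01 (fun x => (u x - mean0 f0 u) ^+ 2 * f0 x)).

Definition linf01 (g : R -> R) : \bar R :=
  ereal_inf [set M : \bar R | {ae leb01, forall x, I01 x -> (`|g x|%:E <= M)%E}].

Definition hell01 (f g : R -> R) : R :=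
  Num.sqrt (int01 (fun x => (Num.sqrt (f x) - Num.sqrt (g x)) ^+ 2)).

Definition is_density01 (f : R -> R) : Prop :=
  measurable_fun I01 f /\ (forall x, I01 x -> 0 <= f x) /\ int01 f = 1.

Definition bdd_away0 (f : R -> R) : Prop :=
  exists lo hi : R, 0 < lo /\ forall x, I01 x -> lo <= f x <= hi.

Definition loglik (n : nat) (X : nat -> R) (f : R -> R) : R :=
  \sum_(i < n) ln (f (X i)).

Definition Wn (f0 : R -> R) (n : nat) (X : nat -> R) (u : R -> R) : R :=
  (Num.sqrt n%:R)^-1 * \sum_(i < n) (u (X i) - mean0 f0 u).

Definition tilt (gt : R -> R) (n : nat) (t : R) (f : R -> R) : R -> R :=
  fun x => f x * expR (- (t * gt x) / Num.sqrt n%:R) /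
           int01 (fun y => f y * expR (- (t * gt y) / Num.sqrt n%:R)).

(* posterior expectation E^{Pi}[G(f) | X^(n)] for a prior Pi on a parameter
   space T, theta |-> dens theta being the density indexed by theta:
   \int G e^{l_n} dPi / \int e^{l_n} dPi   (extended-real division) *)
Definition post_exp {d} {T : measurableType d} (Pi : probability T R)
  (n : nat) (X : nat -> R) (dens : T -> R -> R) (G : T -> R) : \bar R :=
  ((\int[Pi]_th (G th * expR (loglik n X (dens th)))%:E) /
   (\int[Pi]_th (expR (loglik n X (dens th)))%:E))%E.

End defs.

From HB Require Import structures.
From mathcomp Require Import all_boot all_order all_algebra.
From mathcomp Require Import all_classical all_reals all_analysis.
From mathcomp Require Import measurable_realfun.
From mathcomp Require Import ring lra.
Import Order.TTheory GRing.Theory Num.Theory.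
Import numFieldNormedType.Exports.
Local Open Scope classical_set_scope.
Local Open Scope ring_scope.

(* Fix a density f with h(f, f0) <= a_n, let g be the centred gamma_n and
   Z = \int_0^1 f e^(-t g / sqrt n).  Off a Lebesgue-null set |t g / sqrt n| <= 1/2,
   so e^y <= 1 + y + 2 y^2 and ln Z <= Z - 1 give
     t sqrt n <f - f0, gamma_n> + n ln Z <= 2 t^2 \int f g^2,
   while comparing sqrt f with sqrt f0 through the Hellinger bound, using that
   a_n ||g||_oo < 3/4, gives \int f g^2 <= 2 m^2 + 2.  Since
   l_n(f_t) = l_n(f) - t W_n(gamma_n) - n ln Z, this bounds the integrand of the
   posterior numerator by C = 4 m^2 + 4 times that of the right-hand side, for
   Pi_n-almost every f; integrating (nonnegative integrands need no measurability
   in f) gives the claim. *)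

Section real_inequalities.
Context {R : realType}.

Lemma expR_le_quadratic (y : R) : y <= 1/2 -> expR y <= 1 + y + 2 * y ^+ 2.
Proof.
move=> y_le; have y_lt1 : 0 < 1 - y by lra.
have -> : expR y = (expR (- y))^-1 by rewrite expRN invrK.
apply: (@le_trans _ _ (1 - y)^-1).
  by rewrite lef_pV2 ?posrE ?expR_gt0 // -[1 - y]/(1 + - y) expR_ge1Dx.
rewrite -[(1 - y)^-1]mul1r ler_pdivrMr //.
have : 0 <= y ^+ 2 * (1 - 2 * y) by rewrite mulr_ge0 ?sqr_ge0 //; lra.
nra.
Qed.

(* The cross term (x - y)(x + y) c^2 is absorbed by AM-GM, the quadratic form
   5/4 x^2 - 4 x y + 13/4 y^2 being positive definite. *)
Lemma sqr_transfer_le (x y c : R) : 0 <= x -> 0 <= y -> 0 <= c <= 3/4 ->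
  3/4 * (x * c) ^+ 2 <= 5/4 * (y * c) ^+ 2 + 9/8 * (x - y) ^+ 2.
Proof.
move=> x_ge0 y_ge0 /andP[c_ge0 c_le].
have c2 : c ^+ 2 <= 9/16 by nra.
have form : 0 <= 5/4 * x ^+ 2 - 4 * x * y + 13/4 * y ^+ 2.
  have := sqr_ge0 (x - 8/5 * y); have := sqr_ge0 y; nra.
rewrite !exprMn.
have [q_ge0|q_lt0] := leP 0 (3/4 * x ^+ 2 - 5/4 * y ^+ 2).
  have : 0 <= 9/16 - c ^+ 2 by lra.
  move/mulr_ge0/(_ q_ge0); nra.
have : 0 <= - (3/4 * x ^+ 2 - 5/4 * y ^+ 2) by lra.
move/(mulr_ge0 (sqr_ge0 c)); have := sqr_ge0 (x - y); nra.
Qed.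

Lemma le_sqr_sqrtr {v c : R} : Num.sqrt v <= c -> v <= c ^+ 2.
Proof.
move=> vc; have c_ge0 := le_trans (sqrtr_ge0 v) vc.
by rewrite -(ler_sqrt _ (sqr_ge0 c)) sqrtr_sqr ger0_norm.
Qed.

Lemma ln2_ge : 1/2 <= ln (2 : R).
Proof.
have := @le_ln1Dx R (- (1/2)) ltac:(lra).
by rewrite (_ : 1 + - (1/2) = 2^-1 :> R) ?lnV ?posrE //; [lra | field].
Qed.

End real_inequalities.

Section nonneg_integral.
Context d (T : measurableType d) (R : realType) (mu : {measure set T -> \bar R}).
Local Open Scope ereal_scope.
Import HBNNSimple.

(* No measurability is assumed: the posterior integrands are not known to be
   measurable in the parameter. *)
Lemma ge0_ae_le_integralZ (f g : T -> \bar R) (k : R) : (0 < k)%R ->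
  (forall x, 0 <= f x) -> (forall x, 0 <= g x) ->
  {ae mu, forall x, f x <= k%:E * g x} ->
  \int[mu]_x f x <= k%:E * \int[mu]_x g x.
Proof.
move=> k_gt0 f_ge0 g_ge0 [N [mN muN fgN]].
have fg x : ~ N x -> f x <= k%:E * g x.
  by move=> Nx; apply: contrapT => nfg; apply: Nx; apply: fgN.
rewrite (ge0_integralTE _ f_ge0) (ge0_integralTE _ g_ge0).
apply: ge_ereal_sup => _ [h /= hf <-].
have kV_ge0 : (0 <= k^-1)%R by rewrite invr_ge0 ltW.
pose h' := scale_nnsfun (proj_nnsfun h (measurableC mN)) kV_ge0.
have h'E x : h' x = (k^-1 * (h x * \1_(~` N) x))%R by [].
have h'g x : (h' x)%:E <= g x.
  rewrite h'E indicE; have [Nx|Nx] := pselect (N x).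
    by rewrite memNset //= !mulr0 g_ge0.
  rewrite mem_set // mulr1 EFinM.
  apply: (@le_trans _ _ ((k^-1)%:E * (k%:E * g x))).
    by apply: lee_wpmul2l; [rewrite lee_fin|exact: le_trans (hf x) (fg x Nx)].
  by rewrite muleA -EFinM mulVf ?gt_eqF // mul1e.
have sint_nnsfun (u : {nnsfun T >-> R}) : sintegral mu u = \int[mu]_x (u x)%:E.
  by rewrite integral_nnsfun // patch_setT.
have -> : sintegral mu h = k%:E * sintegral mu h'.
  have -> : sintegral mu h' = (k^-1)%:E * sintegral mu (proj_nnsfun h (measurableC mN)).
    by rewrite -sintegralrM.
  rewrite muleA -EFinM divff ?gt_eqF // mul1e !sint_nnsfun.
  rewrite (ge0_negligible_integral _ _ _ _ muN) //; last 2 first.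
  - exact/measurable_EFinP.
  - by move=> x _; rewrite lee_fin.
  rewrite [RHS](ge0_negligible_integral _ _ _ _ muN) //; last 2 first.
  - exact/measurable_EFinP.
  - by move=> x _; rewrite lee_fin.
  apply: eq_integral => x; rewrite inE => -[_ Nx].
  have -> : proj_nnsfun h (measurableC mN) x = (h x * \1_(~` N) x)%R by [].
  by rewrite indicE (@mem_set _ (~` N) x Nx) mulr1.
rewrite lee_pmul2l ?lte_fin //.
exact: ereal_sup_ubound (ex_intro2 _ _ h' h'g erefl).
Qed.

End nonneg_integral.

Lemma lee_ratio (R : realType) (X Y U V : \bar R) (K c : R) :
  (0 < K)%R -> (0 < c)%R -> (0 <= X)%E -> (0 <= Y)%E -> (0 <= U)%E -> (0 <= V)%E ->
  (X <= (K / c)%:E * U)%E -> (V <= c%:E * Y)%E ->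
  (X * Y^-1 <= K%:E * (U * V^-1))%E.
Proof.
move=> K_gt0 c_gt0 X_ge0 Y_ge0 U_ge0 V_ge0 XU VY.
apply: (le_trans (lee_wpmul2r _ XU)); first by rewrite inve_ge0.
have cY_ge0 : (0 <= c%:E * Y)%E by rewrite mule_ge0 // lee_fin ltW.
have cYV : ((c%:E * Y)^-1 = (c^-1)%:E * Y^-1)%E.
  rewrite inveM; last first.
    case: Y Y_ge0 {XU VY cY_ge0} => [s||] //= _.
    by rewrite (gt_eqF c_gt0) (ltW c_gt0) implybT.
  by congr (_ * _)%E; rewrite /inve /= gt_eqF.
have -> : ((K / c)%:E * U * Y^-1 = K%:E * (U * (c%:E * Y)^-1))%E.
  by rewrite cYV EFinM -!muleA; congr (_ * _)%E; rewrite muleCA.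
apply: lee_wpmul2l; first by rewrite lee_fin ltW.
by apply: lee_wpmul2l => //; rewrite lee_pV2 // inE.
Qed.

Section unit_interval.
Context {R : realType}.
Implicit Types (N : set R) (F G : R -> R).

Lemma measurable_I01 : measurable (@I01 R).
Proof. exact: measurable_itv. Qed.

Lemma leb01_I01 : leb01 (@I01 R) = 1%E.
Proof. by rewrite /leb01 /I01 lebesgue_measure_itv /= lte01 /= oppr0 adde0. Qed.

(* The bound is only required off a null set [N] because gamma_n is controlled
   through an essential supremum. *)
Definition bdd_measurable N F :=
  measurable_fun I01 F /\ exists B, forall x, (I01 `\` N) x -> `|F x| <= B.

Lemma bdd_measurable_cst N c : bdd_measurable N (fun=> c).
Proof. by split; [exact: measurable_cst | exists `|c|]. Qed.

Lemma bdd_measurableD N F G : bdd_measurable N F -> bdd_measurable N G ->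
  bdd_measurable N (fun x => F x + G x).
Proof.
move=> [mF [B FB]] [mG [C GC]]; split; first exact: measurable_funD.
exists (B + C) => x Dx.
by rewrite (le_trans (ler_normD _ _)) // lerD ?FB ?GC.
Qed.

Lemma bdd_measurableN N F : bdd_measurable N F -> bdd_measurable N (fun x => - F x).
Proof.
move=> [mF [B FB]]; split; first exact: measurableT_comp mF.
by exists B => x Dx; rewrite normrN FB.
Qed.

Lemma bdd_measurableB N F G : bdd_measurable N F -> bdd_measurable N G ->
  bdd_measurable N (fun x => F x - G x).
Proof. by move=> bF bG; apply: bdd_measurableD => //; exact: bdd_measurableN. Qed.

Lemma bdd_measurableM N F G : bdd_measurable N F -> bdd_measurable N G ->
  bdd_measurable N (fun x => F x * G x).
Proof.
move=> [mF [B FB]] [mG [C GC]]; split; first exact: measurable_funM.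
by exists (B * C) => x Dx; rewrite normrM ler_pM ?FB ?GC.
Qed.

Lemma bdd_measurableX N F : bdd_measurable N F -> bdd_measurable N (fun x => F x ^+ 2).
Proof.
by move=> bF; under [X in bdd_measurable _ X]funext do rewrite expr2; exact: bdd_measurableM.
Qed.

Lemma bdd_measurable_expR N F : bdd_measurable N F ->
  bdd_measurable N (fun x => expR (F x)).
Proof.
move=> [mF [B FB]]; split; first exact: measurableT_comp mF.
exists (expR B) => x Dx.
by rewrite ger0_norm ?expR_ge0 // ler_expR (le_trans (ler_norm _)) ?FB.
Qed.

Lemma bdd_measurable_sqrt N F : bdd_measurable N F ->
  bdd_measurable N (fun x => Num.sqrt (F x)).
Proof.
move=> [mF [B FB]]; split.
  exact: measurableT_comp (continuous_measurable_fun (@sqrt_continuous R)) mF.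
exists (1 + B) => x Dx; rewrite ger0_norm ?sqrtr_ge0 //.
have [Fx_ge0|Fx_lt0] := leP 0 (F x); last first.
  by rewrite ltr0_sqrtr // addr_ge0 // (le_trans _ (FB x Dx)).
have := FB x Dx; rewrite ger0_norm //.
have := sqr_sqrtr Fx_ge0; have := sqrtr_ge0 (F x); nra.
Qed.

Section null_set.
Context {N : set R} (mN : measurable N) (N0 : leb01 N = 0%E).
Let D := I01 `\` N.
Let mD : measurable D. Proof. exact: measurableD measurable_I01 mN. Qed.

Lemma bdd_measurable_integrable {F} : bdd_measurable N F ->
  leb01.-integrable D (EFin \o F).
Proof.
move=> [mF [B FB]]; apply: measurable_bounded_integrable => //.
- rewrite (le_lt_trans _ (ltry 1)) // -leb01_I01.
  by apply: le_measure; rewrite ?inE //; [exact: measurable_I01 | exact: subDsetl].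
- exact: measurable_funS measurable_I01 (@subDsetl _ _ N) mF.
- exists B; split; first by rewrite num_real.
  by move=> M BM x Dx; exact: le_trans (FB _ Dx) (ltW BM).
Qed.

Lemma int01_null {F} : bdd_measurable N F -> int01 F = \int[leb01]_(x in D) F x.
Proof.
move=> bF; have iD := bdd_measurable_integrable bF.
have iI : leb01.-integrable I01 (EFin \o F).
  apply/integrableP; split; first by case: bF => mF _; exact/measurable_EFinP.
  rewrite (ge0_negligible_integral _ _ _ _ N0) //; first by case/integrableP: iD.
  - exact: measurable_I01.
  - by case: bF => mF _; apply: measurableT_comp => //; exact/measurable_EFinP.
by rewrite /int01 /Rintegral (negligible_integral _ _ iI N0) //; exact: measurable_I01.
Qed.

Lemma int01D {F G} : bdd_measurable N F -> bdd_measurable N G ->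
  int01 (fun x => F x + G x) = int01 F + int01 G.
Proof.
move=> bF bG; rewrite !int01_null //; last exact: bdd_measurableD.
by rewrite RintegralD //; exact: bdd_measurable_integrable.
Qed.

Lemma int01B {F G} : bdd_measurable N F -> bdd_measurable N G ->
  int01 (fun x => F x - G x) = int01 F - int01 G.
Proof.
move=> bF bG; rewrite !int01_null //; last exact: bdd_measurableB.
by rewrite RintegralB //; exact: bdd_measurable_integrable.
Qed.

Lemma int01Zl c {F} : bdd_measurable N F -> int01 (fun x => c * F x) = c * int01 F.
Proof.
move=> bF; rewrite !int01_null //; last exact: bdd_measurableM (bdd_measurable_cst _ _) bF.
by rewrite RintegralZl //; exact: bdd_measurable_integrable.
Qed.

Lemma le_int01 {F G} : bdd_measurable N F -> bdd_measurable N G ->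
  (forall x, D x -> F x <= G x) -> int01 F <= int01 G.
Proof.
move=> bF bG FG; rewrite !int01_null //.
by apply: le_Rintegral => //; exact: bdd_measurable_integrable.
Qed.

End null_set.

End unit_interval.

Section tilted_normalizer.
Context {R : realType}.
Context {N : set R} (mN : measurable N) (N0 : leb01 N = 0%E).
Context {f0 f g : R -> R} {a K m s t : R}.
Hypotheses (bf0 : bdd_measurable N f0) (bf : bdd_measurable N f)
  (bg : bdd_measurable N g).
Hypotheses (f0_ge0 : forall x, I01 x -> 0 <= f0 x) (f_ge0 : forall x, I01 x -> 0 <= f x)
  (int_f : int01 f = 1).
Hypotheses (a_gt0 : 0 < a) (aK : a * K <= 3/4)
  (gK : forall x, (I01 `\` N) x -> `|g x| <= K).
Hypotheses (g_var : int01 (fun x => g x ^+ 2 * f0 x) <= m ^+ 2)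
  (f_hell : int01 (fun x => (Num.sqrt (f x) - Num.sqrt (f0 x)) ^+ 2) <= a ^+ 2).
Hypotheses (s_gt0 : 0 < s) (tKs : `|t| * K / s <= 1/2).

Local Hint Resolve bdd_measurable_cst bdd_measurableD bdd_measurableB bdd_measurableN
  bdd_measurableM bdd_measurableX bdd_measurable_expR bdd_measurable_sqrt : core.

Let Z := int01 (fun x => f x * expR (- (t * g x) / s)).

Let exponent_le x : (I01 `\` N) x -> `|- (t * g x) / s| <= 1/2.
Proof.
move=> Dx; apply: le_trans tKs.
rewrite normrM normrN normrM normfV (gtr0_norm s_gt0).
by rewrite ler_pM2r ?invr_gt0 // ler_wpM2l ?gK.
Qed.

Lemma second_moment_le : int01 (fun x => f x * g x ^+ 2) <= 2 * m ^+ 2 + 2.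
Proof.
pose H x := (Num.sqrt (f x) - Num.sqrt (f0 x)) ^+ 2.
have bH : bdd_measurable N H by rewrite /H; auto.
have pointwise x : (I01 `\` N) x ->
    3/4 * (f x * g x ^+ 2) <= 5/4 * (g x ^+ 2 * f0 x) + 9/8 * (a ^-2 * H x).
  move=> Dx; have [Ix _] := Dx.
  have ag : 0 <= a * `|g x| <= 3/4.
    rewrite mulr_ge0 ?normr_ge0 ?(ltW a_gt0) //=; apply: (le_trans _ aK).
    by apply: ler_wpM2l; [exact: ltW | exact: gK].
  have := @sqr_transfer_le _ _ _ _ (sqrtr_ge0 (f x)) (sqrtr_ge0 (f0 x)) ag.
  rewrite !exprMn !sqr_sqrtr ?f_ge0 ?f0_ge0 // real_normK ?num_real //.
  have a2 : 0 < a ^+ 2 by rewrite exprn_gt0.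
  rewrite -/(H x).
  have -> : 5/4 * (f0 x * (a ^+ 2 * g x ^+ 2)) + 9/8 * (H x)
      = a ^+ 2 * (5/4 * (g x ^+ 2 * f0 x) + 9/8 * (a ^-2 * H x)).
    by field; rewrite gt_eqF.
  have -> : 3/4 * (f x * (a ^+ 2 * g x ^+ 2)) = a ^+ 2 * (3/4 * (f x * g x ^+ 2)).
    by ring.
  by rewrite ler_pM2l.
have hell_a : a ^-2 * int01 H <= 1.
  by rewrite mulrC ler_pdivrMr ?exprn_gt0 // mul1r.
have : 3/4 * int01 (fun x => f x * g x ^+ 2) <= 5/4 * m ^+ 2 + 9/8.
  rewrite -(int01Zl mN N0); last by auto.
  apply: (le_trans (le_int01 mN N0 _ _ pointwise)); try by auto.
  rewrite (int01D mN N0) ?(int01Zl mN N0) //; try by auto.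
  by apply: lerD; [rewrite ler_pM2l | rewrite -[leRHS]mulr1 ler_pM2l]; rewrite // ?divr_gt0.
have := sqr_ge0 m; lra.
Qed.

Let bdd_measurable_tilted : bdd_measurable N (fun x => f x * expR (- (t * g x) / s)).
Proof. by auto 7. Qed.

Lemma tilted_normalizer_ge : 1/2 <= Z.
Proof.
have -> : 1/2 = int01 (fun x => 1/2 * f x) by rewrite (int01Zl mN N0) // int_f mulr1.
apply: (le_int01 mN N0); try by auto.
move=> x Dx; have [Ix _] := Dx; rewrite mulrC ler_wpM2l ?f_ge0 //.
have := exponent_le x Dx; have := expR_ge1Dx (- (t * g x) / s); rewrite ler_norml; lra.
Qed.

Lemma tilted_normalizer_le :
  Z <= 1 - t / s * int01 (fun x => f x * g x)
         + 2 * (t / s) ^+ 2 * int01 (fun x => f x * g x ^+ 2).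
Proof.
have -> : 1 - t / s * int01 (fun x => f x * g x)
    + 2 * (t / s) ^+ 2 * int01 (fun x => f x * g x ^+ 2)
  = int01 (fun x => f x + (- t / s) * (f x * g x) + (2 * (t / s) ^+ 2) * (f x * g x ^+ 2)).
  rewrite !(int01D mN N0) ?(int01Zl mN N0) ?int_f; try by auto.
  by rewrite mulNr mulNr.
apply: (le_int01 mN N0); try by auto.
move=> x Dx; have [Ix _] := Dx.
have -> : f x + - t / s * (f x * g x) + 2 * (t / s) ^+ 2 * (f x * g x ^+ 2)
    = f x * (1 + (- (t * g x) / s) + 2 * (- (t * g x) / s) ^+ 2) by ring.
rewrite ler_wpM2l ?f_ge0 // expR_le_quadratic //.
by have := exponent_le x Dx; rewrite ler_norml; lra.
Qed.

Lemma tilted_normalizer_bound :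
  t * s * int01 (fun x => f x * g x) + s ^+ 2 * ln Z <= (4 * m ^+ 2 + 4) * t ^+ 2.
Proof.
have Z_gt0 : 0 < Z by have := tilted_normalizer_ge; lra.
have lnZ : ln Z <= Z - 1.
  by have := @le_ln1Dx R (Z - 1); rewrite addrCA subrr addr0; apply; lra.
have := tilted_normalizer_le; have := second_moment_le.
move: (int01 (fun x => f x * g x)) (int01 (fun x => f x * g x ^+ 2)) => S1 S2 S2_le Z_le.
have s2 : 0 < s ^+ 2 by rewrite exprn_gt0.
have : s ^+ 2 * ln Z <= s ^+ 2 * (- (t / s) * S1 + 2 * (t / s) ^+ 2 * S2).
  by rewrite ler_pM2l //; lra.
have -> : s ^+ 2 * (- (t / s) * S1 + 2 * (t / s) ^+ 2 * S2) = - (t * s) * S1 + 2 * t ^+ 2 * S2.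
  by field; rewrite gt_eqF.
have := ler_wpM2l (sqr_ge0 t) S2_le; lra.
Qed.

End tilted_normalizer.

Lemma linf01_lt_bound {R : realType} {g : R -> R} {K : R} : (linf01 g < K%:E)%E ->
  exists N : set R, [/\ measurable N, leb01 N = 0%E &
    forall x, (I01 `\` N) x -> `|g x| <= K].
Proof.
case/ereal_inf_lt => M [N [mN N0 gM]] MK; exists N; split => // x [Ix Nx].
have gxM : (`|g x|%:E <= M)%E.
  by apply: contrapT => ngM; apply: Nx; apply: gM => /(_ Ix).
by rewrite -lee_fin (le_trans gxM) // ltW.
Qed.

Section centering.
Context {R : realType} {N : set R} (mN : measurable N) (N0 : leb01 N = 0%E).
Variables (f0 f gam : R -> R).
Hypotheses (bf0 : bdd_measurable N f0) (bf : bdd_measurable N f)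
  (bgam : bdd_measurable N gam) (int_f0 : int01 f0 = 1) (int_f : int01 f = 1).

Local Hint Resolve bdd_measurable_cst bdd_measurableD bdd_measurableB bdd_measurableM : core.

Lemma mean0_centered : mean0 f0 (centered f0 gam) = 0.
Proof.
rewrite /mean0 /centered.
under eq_fun do rewrite mulrBl.
by rewrite (int01B mN N0) ?(int01Zl mN N0) -/(mean0 f0 gam) ?int_f0 ?mulr1 ?subrr; auto.
Qed.

Lemma ip01_centered :
  ip01 (fun x => f x - f0 x) gam = int01 (fun x => f x * centered f0 gam x).
Proof.
transitivity (int01 (fun x => f x * gam x) - mean0 f0 gam).
  rewrite /ip01 /mean0 -(int01B mN N0); try by auto.
  by congr int01; apply/funext => x; ring.
transitivity (int01 (fun x => f x * gam x - mean0 f0 gam * f x)).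
  by rewrite (int01B mN N0) ?(int01Zl mN N0) ?int_f ?mulr1; auto.
by congr int01; apply/funext => x; rewrite /centered; ring.
Qed.

End centering.

Lemma tilt_parameters {R : realType} {n : nat} {a t : R} :
  (1 <= n)%N -> 0 < a -> 1 <= n%:R * a ^+ 2 -> `|t| <= ln n%:R ->
  let K := (3 * a * ln n.+1%:R)^-1 in
  [/\ (4 * a * ln n.+1%:R)^-1 < K, a * K <= 3/4 & `|t| * K / Num.sqrt n%:R <= 1/2].
Proof.
move=> n_ge1 a_gt0 na2 tn K; rewrite {}/K; set L := ln _.
have n_gt0 : 0 < n%:R :> R by rewrite ltr0n.
have L_ge : 1/2 <= L.
  by apply: (le_trans ln2_ge); rewrite ler_ln ?posrE ?ltr0n // ler_nat ltnS.
have tL : `|t| <= L.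
  by apply: (le_trans tn); rewrite ler_ln ?posrE ?ltr0n // ler_nat.
set s := Num.sqrt n%:R; have s_gt0 : 0 < s by rewrite sqrtr_gt0.
have as_ge1 : 1 <= a * s.
  have : 1 <= (a * s) ^+ 2 by rewrite exprMn sqr_sqrtr ?ler0n // mulrC.
  have := mulr_gt0 a_gt0 s_gt0; nra.
have L_gt0 : 0 < L by lra.
have aL_gt0 : 0 < a * L by rewrite mulr_gt0.
split.
- by rewrite ltf_pV2 ?posrE -?mulrA ?mulr_gt0 //; lra.
- by rewrite ler_pdivrMr -?mulrA ?mulr_gt0 //; nra.
- by rewrite !ler_pdivrMr -?mulrA ?mulr_gt0 //; nra.
Qed.

Lemma loglik_tilt {R : realType} {gt f : R -> R} {n : nat} (t : R) (X : nat -> R) :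
  (forall i, (i < n)%N -> 0 < f (X i)) ->
  let Z := int01 (fun y => f y * expR (- (t * gt y) / Num.sqrt n%:R)) in
  0 < Z ->
  loglik n X (tilt gt n t f) =
  loglik n X f - t / Num.sqrt n%:R * \sum_(i < n) gt (X i) - n%:R * ln Z.
Proof.
move=> f_gt0 Z Z_gt0; rewrite /loglik /tilt -/Z mulr_sumr.
have -> : n%:R * ln Z = \sum_(i < n) ln Z by rewrite sumr_const card_ord mulr_natl.
rewrite -!sumrB; apply: eq_bigr => i _.
rewrite !lnM ?posrE ?mulr_gt0 ?expR_gt0 ?invr_gt0 ?f_gt0 // lnV ?posrE // expRK.
by rewrite mulNr mulrAC.
Qed.

Lemma tilted_log_normalizer_le {R : realType} {m D0 D : R} {f0 f gam : R -> R}
    {a : R} {n : nat} {t : R} :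
  is_density01 f0 -> (forall x, I01 x -> f0 x <= D0) ->
  is_density01 f -> (forall x, I01 x -> f x <= D) ->
  hell01 f f0 <= a -> 1 <= n%:R * a ^+ 2 ->
  measurable_fun I01 gam -> Lnorm_f0 f0 (centered f0 gam) <= m ->
  (linf01 (centered f0 gam) <= ((4 * a * ln n.+1%:R)^-1)%:E)%E ->
  (1 <= n)%N -> `|t| <= ln n%:R ->
  let Z := int01 (fun x => f x * expR (- (t * centered f0 gam x) / Num.sqrt n%:R)) in
  0 < Z /\
  t * Num.sqrt n%:R * ip01 (fun x => f x - f0 x) gam + n%:R * ln Z
    <= (4 * m ^+ 2 + 4) * t ^+ 2.
Proof.
move=> [mf0 [f0_ge0 int_f0]] f0_le [mf [f_ge0 int_f]] f_le hell na2 mgam g_var gK n_ge1 tn Z.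
have a_gt0 : 0 < a.
  rewrite lt_def (le_trans (sqrtr_ge0 _) hell) andbT; apply: contraTneq na2 => ->.
  by rewrite expr0n mulr0 ler10.
have [K_gt aK tKs] := tilt_parameters n_ge1 a_gt0 na2 tn.
set K := (3 * a * _)^-1 in K_gt aK tKs.
have [N [mN N0 {}gK]] := linf01_lt_bound (le_lt_trans gK (K_gt : (_%:E < K%:E)%E)).
set g := centered f0 gam in g_var gK Z *.
have bounded_off_N (F : R -> R) (B : R) : measurable_fun I01 F ->
    (forall x, I01 x -> 0 <= F x <= B) -> bdd_measurable N F.
  move=> mF FB; split => //; exists B => x [Ix _].
  by have /andP[F_ge0 F_le] := FB x Ix; rewrite ger0_norm.
have bf0 : bdd_measurable N f0.
  by apply: (bounded_off_N _ D0 mf0) => x Ix; rewrite f0_ge0 ?f0_le.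
have bf : bdd_measurable N f.
  by apply: (bounded_off_N _ D mf) => x Ix; rewrite f_ge0 ?f_le.
have bg : bdd_measurable N g.
  by split; [exact: measurable_funB | exists K].
have bgam : bdd_measurable N gam.
  rewrite (_ : gam = fun x => g x + mean0 f0 gam).
    exact: bdd_measurableD bg (bdd_measurable_cst _ _).
  by apply/funext => x; rewrite /g /centered subrK.
rewrite /Lnorm_f0 (mean0_centered mN N0) // in g_var.
rewrite (_ : (fun x => _) = fun x => g x ^+ 2 * f0 x) in g_var; last first.
  by apply/funext => x; rewrite subr0.
have s_gt0 : 0 < Num.sqrt n%:R :> R by rewrite sqrtr_gt0 ltr0n.
split.
  by apply: lt_le_trans (tilted_normalizer_ge mN N0 bf bg f_ge0 int_f gK s_gt0 tKs).
rewrite (ip01_centered mN N0) // -[X in X * ln Z](@sqr_sqrtr _ n%:R) ?ler0n //.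
by have := tilted_normalizer_bound mN N0 bf0 bf bg f0_ge0 f_ge0 int_f a_gt0 aK gK
  (le_sqr_sqrtr g_var) (le_sqr_sqrtr hell) s_gt0 tKs.
Qed.

Lemma tilted_likelihood_le {R : realType} {m D0 D : R} {f0 f gam : R -> R}
    {a : R} {n : nat} {t : R} {X : nat -> R} :
  is_density01 f0 -> (forall x, I01 x -> f0 x <= D0) ->
  is_density01 f -> (forall x, I01 x -> f x <= D) ->
  hell01 f f0 <= a -> 1 <= n%:R * a ^+ 2 ->
  measurable_fun I01 gam -> Lnorm_f0 f0 (centered f0 gam) <= m ->
  (linf01 (centered f0 gam) <= ((4 * a * ln n.+1%:R)^-1)%:E)%E ->
  (1 <= n)%N -> `|t| <= ln n%:R -> (forall i, (i < n)%N -> 0 < f (X i)) ->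
  expR (t * Num.sqrt n%:R * ip01 (fun x => f x - f0 x) gam) * expR (loglik n X f)
  <= expR ((4 * m ^+ 2 + 4) * t ^+ 2 + t * Wn f0 n X gam) / expR (- loglik n X f0)
     * expR (loglik n X (tilt (centered f0 gam) n t f) - loglik n X f0).
Proof.
move=> f0_dens f0_le f_dens f_le hell na2 mgam g_var gK n_ge1 tn f_gt0.
have [Z_gt0 bound] := tilted_log_normalizer_le f0_dens f0_le f_dens f_le hell na2 mgam
  g_var gK n_ge1 tn.
rewrite (loglik_tilt t X f_gt0 Z_gt0) expRN invrK -!expRD ler_expR.
have -> : t / Num.sqrt n%:R * \sum_(i < n) centered f0 gam (X i) = t * Wn f0 n X gam.
  by rewrite /Wn mulrA.
lra.
Qed.

Theorem lemma3 (R : realType) (m Dinf : R) : 0 < m ->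
  exists C : R, 0 < C /\
  forall (d : measure_display) (T : measurableType d)
    (f0 : R -> R) (a : nat -> R) (Pi : nat -> probability T R)
    (dens : T -> R -> R) (gam : nat -> R -> R),
    is_density01 f0 ->
    (exists rho0 D0 : R, 0 < rho0 /\ forall x, I01 x -> rho0 <= f0 x <= D0) ->
    linf01 f0 = Dinf%:E ->
    (forall n : nat, (1 <= n)%N -> 1 <= n%:R * a n ^+ 2) ->
    measurable_fun setT (fun p : T * R => dens p.1 p.2) ->
    (forall n : nat, (1 <= n)%N ->
       {ae Pi n, forall th, is_density01 (dens th) /\ bdd_away0 (dens th) /\
                            hell01 (dens th) f0 <= a n}) ->
    (forall n : nat, measurable_fun I01 (gam n) /\ (linf01 (gam n) < +oo)%E) ->
    (forall n : nat, (1 <= n)%N -> Lnorm_f0 f0 (centered f0 (gam n)) <= m) ->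
    (forall n : nat, (1 <= n)%N ->
       (linf01 (centered f0 (gam n)) <= ((4 * a n * ln (n.+1)%:R)^-1)%:E)%E) ->
    forall (n : nat) (t : R) (X : nat -> R),
      (1 <= n)%N -> `|t| <= ln n%:R ->
      (forall i : nat, (i < n)%N -> I01 (X i)) ->
      (post_exp (Pi n) n X dens
         (fun th => expR (t * Num.sqrt n%:R *
                          ip01 (fun x => dens th x - f0 x) (gam n)))%R
       <= (expR (C * t ^+ 2 + t * Wn f0 n X (gam n)))%R%:E *
          ((\int[Pi n]_th
              (expR (loglik n X (tilt (centered f0 (gam n)) n t (dens th))
                     - loglik n X f0))%R%:E) /
           (\int[Pi n]_th (expR (loglik n X (dens th) - loglik n X f0))%R%:E)))%E.
Proof.
move=> m_gt0; exists (4 * m ^+ 2 + 4); split; first by have := sqr_ge0 m; lra.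
move=> d T f0 a Pi dens gam f0_dens [rho0 [D0 [_ f0_bd]]] _ na2 _ prior_ae
  gam_bd g_var gK n t X n_ge1 tn X01.
have f0_le x : I01 x -> f0 x <= D0 by case/f0_bd/andP.
apply: (@lee_ratio _ _ _ _ _ _ (expR (- loglik n X f0))); try by
  [ exact: expR_gt0
  | apply: integral_ge0 => th _; rewrite lee_fin ?mulr_ge0 ?expR_ge0 ].
- apply: ge0_ae_le_integralZ; try by [ rewrite divr_gt0 ?expR_gt0
    | move=> th; rewrite lee_fin ?mulr_ge0 ?expR_ge0 ].
  apply: filterS (prior_ae n n_ge1) => th [f_dens [[lo [hi [lo_gt0 f_bd]]] hell]].
  have f_le x : I01 x -> dens th x <= hi by case/f_bd/andP.
  rewrite -EFinM lee_fin; apply: (tilted_likelihood_le f0_dens f0_le f_dens f_le hell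
    (na2 n n_ge1) (gam_bd n).1 (g_var n n_ge1) (gK n n_ge1) n_ge1 tn).
  by move=> i /X01/f_bd/andP[lo_le _]; exact: lt_le_trans lo_le.
- apply: ge0_ae_le_integralZ; try by [ exact: expR_gt0
    | move=> th; rewrite lee_fin expR_ge0 ].
  by apply: aeW => th; rewrite -EFinM lee_fin -expRD addrC.
Qed.
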